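(* Let $A\in M_n(\mathbb{Z})$ induce an ergodic endomorphism of $\mathbb{T}^n$, and let $p$ be an odd prime with $\gcd(p,\det A)=1$. Let $\{u_m\}_{m\ge0}$ be the linear recurrence sequence induced by $A$ and, for $r\ge1$, let $T_r$ be the (minimal) period of the sequence $\{u_m \bmod p^r\}_{m\ge 0}$. Then there is $t\in\mathbb{N}$ such that $T_1=T_2=\cdots=T_t$ and $T_k=p^{k-t}T_1$ for every $k>t$.
   Context: Write $f(x)=\det(xI-A)=x^n-c_{n-1}x^{n-1}-\cdots-c_1x-c_0$. The linear recurrence sequence induced by $A$ is the integer sequence defined by $u_0=u_1=\cdots=u_{n-2}=0$, $u_{n-1}=1$, and $u_{m+n}=c_{n-1}u_{m+n-1}+\cdots+c_1u_{m+1}+c_0u_m$ for $m\ge 0$. When $\gcd(p,\det A)=1$, the sequence $\{u_m\bmod p^r\}$ is purely periodic. The endomorphism $x\mapsto Ax\bmod 1$ of $\mathbb{T}^n=\mathbb{R}^n/\mathbb{Z}^n$ is ergodic if it is ergodic with respect to Lebesgue measure (equivalently, $\det A\neq0$ and no eigenvalue of $A$ is a root of unity). *)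

From HB Require Import structures.
From mathcomp Require Import all_boot all_order all_algebra all_field.
Set Implicit Arguments. Unset Strict Implicit. Unset Printing Implicit Defensive.
Import Order.TTheory GRing.Theory Num.Theory.
Local Open Scope ring_scope.

(* Ergodicity of x |-> Ax mod 1 on T^n: det A <> 0 and no (complex)
   eigenvalue of A is a root of unity.  Eigenvalues are the roots in algC
   of the characteristic polynomial. *)
Definition ergodic_mx (n : nat) (A : 'M[int]_n) : Prop :=
  \det A != 0 /\
  forall z : algC, root (map_poly (intr : int -> algC) (char_poly A)) z ->
    forall k : nat, (0 < k)%N -> z ^+ k != 1.

(* f(x) = det(xI - A) = x^n - c_{n-1} x^{n-1} - ... - c_0, so c_i = - f_i. *)
Definition lrs_coef (n : nat) (A : 'M[int]_n) (i : nat) : int :=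
  - (char_poly A)`_i.

(* State (window) of the recurrence: [:: u_m; ...; u_{m+n-1}]. *)
Fixpoint lrs_state (n : nat) (A : 'M[int]_n) (m : nat) : seq int :=
  match m with
  | 0 => rcons (nseq n.-1 0) 1
  | m'.+1 => let s := lrs_state A m' in
             rcons (behead s) (\sum_(i < n) lrs_coef A i * s`_i)
  end.

(* The linear recurrence sequence induced by A:
   u_0 = ... = u_{n-2} = 0, u_{n-1} = 1,
   u_{m+n} = c_{n-1} u_{m+n-1} + ... + c_0 u_m. *)
Definition lrs (n : nat) (A : 'M[int]_n) (m : nat) : int :=
  head 0 (lrs_state A m).

Definition min_period_mod (v : nat -> int) (d : int) (T : nat) : Prop :=
  (0 < T)%N /\ (forall m, (v (m + T)%N == v m %[mod d])%Z) /\
  forall T', (0 < T')%N -> (forall m, (v (m + T')%N == v m %[mod d])%Z) ->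
    (T <= T')%N.

(* Let C be the companion matrix of the recurrence. The Hankel matrix built
   from the first n windows of the sequence is unitriangular, so Q is a period
   of u mod p^r exactly when C^Q = 1 mod p^r. Write D = C^T_1 = 1 + p^t B
   with p not dividing B: t >= 1 since T_1 is a period mod p, and t is finite
   because D <> 1, an eigenvalue of C being no root of unity. For odd p the
   binomial theorem gives (1 + p^s B)^p = 1 + p^(s+1) B mod p^(s+2), so
   D^(p^e) - 1 has exact p-adic valuation t + e. Hence T_k divides T_1 p^e
   iff k <= t + e, i.e. T_k = p^(k - t) T_1 with truncated subtraction. *)

From HB Require Import structures.
From mathcomp Require Import all_boot all_order all_algebra all_field.
From mathcomp Require Import zify.
Set Implicit Arguments. Unset Strict Implicit. Unset Printing Implicit Defensive.
Import Order.TTheory GRing.Theory Num.Theory.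
Local Open Scope ring_scope.

Section MatricesModulo.
Variables m n : nat.
Implicit Types (d : int) (X : 'M[int]_(m, n)).

Lemma mulmx_mxOver_dvdzl d k X (Y : 'M[int]_(n, k)) :
  X \is a mxOver (dvdz d) -> X *m Y \is a mxOver (dvdz d).
Proof.
move=> /mxOverP dX; apply/mxOverP => i j; rewrite mxE.
by apply: rpred_sum => l _; apply: dvdz_mulr.
Qed.

Lemma scale_mxOver_dvdz d c X : (d %| c)%Z -> c *: X \is a mxOver (dvdz d).
Proof. by move=> dc; apply/mxOverP => i j; rewrite mxE dvdz_mulr. Qed.

Lemma mxOver_dvdz_trans d e X :
  (d %| e)%Z -> X \is a mxOver (dvdz e) -> X \is a mxOver (dvdz d).
Proof. by move=> de; apply: mxOverS => x; apply: dvdz_trans. Qed.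

Lemma mxOver_dvdz_scale d X : X \is a mxOver (dvdz d) -> exists B, X = d *: B.
Proof.
move=> /mxOverP dX; exists (\matrix_(i, j) (X i j %/ d)%Z).
by apply/matrixP => i j; rewrite !mxE mulrC divzK.
Qed.

Lemma scale_pexp_mxOver_dvdz (p t k : nat) X :
  prime p -> X \isn't a mxOver (dvdz p) ->
  ((p ^ t)%:Z *: X \is a mxOver (dvdz (p ^ k)%:Z)) = (k <= t)%N.
Proof.
move=> p_pr pX; apply/idP/idP => [/mxOverP dX | le_kt]; last first.
  by apply: scale_mxOver_dvdz; rewrite dvdzE /= dvdn_exp2l.
rewrite leqNgt; apply/negP => lt_tk; move/negP: pX; apply; apply/mxOverP => i j.
have /dvdz_trans/(_ (dX i j)) : ((p ^ t.+1)%:Z %| (p ^ k)%:Z)%Z.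
  by rewrite dvdzE /= dvdn_exp2l.
rewrite mxE expnSr PoszM dvdz_mul2l //.
by rewrite -natz pnatr_eq0 -lt0n expn_gt0 prime_gt0.
Qed.

Lemma mx_pfactor (p : nat) X : (1 < p)%N -> X != 0 ->
  exists t B, X = (p ^ t)%:Z *: B /\ B \isn't a mxOver (dvdz p).
Proof.
move=> p_gt1 X_neq0.
have /existsP[i /existsP[j Xij]] : [exists i, exists j, X i j != 0].
  apply: contraR X_neq0 => /existsPn X0; apply/eqP/matrixP => i j.
  by have /existsPn/(_ j)/negPn/eqP := X0 i; rewrite mxE.
have [N] := ubnP `|X i j|%N; elim: N X Xij {X_neq0} => // N IHN X Xij ltXN.
have [pX | npX] := boolP (X \is a mxOver (dvdz p)); last first.
  by exists 0%N, X; rewrite expn0 scale1r.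
have [Y defX] := mxOver_dvdz_scale pX.
have Yij : Y i j != 0.
  by apply: contraNneq Xij; rewrite defX mxE => ->; rewrite mulr0.
have [|t [B [defY pB]]] := IHN Y Yij.
  rewrite -ltnS (leq_trans _ ltXN) // ltnS defX mxE abszM ltn_Pmull //.
  by rewrite absz_gt0.
by exists t.+1, B; rewrite defX defY scalerA -PoszM expnS.
Qed.

End MatricesModulo.

(* The term i = p of the binomial expansion is divisible by p^(s p); this is
   where p >= 3 is needed to get p^(s+2). *)
Lemma lift_exponent_step n (p s : nat) (B : 'M[int]_n.+1) :
  prime p -> odd p -> (0 < s)%N ->
  (1 + (p ^ s)%:Z *: B) ^+ p - 1 - (p ^ s.+1)%:Z *: B
    \is a mxOver (dvdz (p ^ s.+2)%:Z).
Proof.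
case: p => [|[|p']] // p_pr p_odd s_gt0.
have p'_gt0 : (0 < p')%N by case: p' p_odd {p_pr}.
rewrite [1 + _]addrC exprD1n big_ord_recl big_ord_recl /= expr0 expr1 bin0 bin1.
have -> : (p'.+2 ^ s)%:Z *: B *+ p'.+2 = (p'.+2 ^ s.+1)%:Z *: B.
  by rewrite -scaler_nat scalerA natz -PoszM expnS.
have -> (x y : 'M[int]_n.+1) : 1 *+ 1 + (x + y) - 1 - x = y.
  by rewrite mulr1n [1 + _]addrC addrK addrC addKr.
apply: rpred_sum => i _; rewrite exprZn -scaler_nat scalerA /bump !leq0n.
apply: scale_mxOver_dvdz; rewrite -!natz -natrX -natrM !natz dvdzE /= -expnM.
have [lt_ip' | le_p'i] := ltnP i p'.
  by rewrite expnS dvdn_mul ?prime_dvd_bin ?dvdn_exp2l //; nia.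
have -> : (i : nat) = p' by have := ltn_ord i; lia.
by rewrite dvdn_mull // dvdn_exp2l //; nia.
Qed.

Lemma lift_exponent n (p t : nat) (B : 'M[int]_n.+1) :
  prime p -> odd p -> (0 < t)%N -> forall e,
  exists2 Be, (1 + (p ^ t)%:Z *: B) ^+ (p ^ e) = 1 + (p ^ (t + e))%:Z *: Be
            & Be - B \is a mxOver (dvdz p).
Proof.
move=> p_pr p_odd t_gt0; elim=> [|e [Be defDe pBe]].
  by exists B; rewrite ?expr1 ?addn0 // subrr rpred0.
have /mxOver_dvdz_scale[E defE] :=
  lift_exponent_step Be p_pr p_odd (ltn_addr e t_gt0).
exists (Be + p%:Z *: E); last by rewrite addrAC rpredD // scale_mxOver_dvdz.
move/eqP: defE; rewrite !subr_eq => /eqP defDpe.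
rewrite expnSr exprM defDe defDpe scalerDr scalerA -PoszM -expnSr addnS.
by rewrite addrC [_ *: Be + _]addrC addrA.
Qed.

Lemma lift_exponent_valuation n (p t : nat) (B : 'M[int]_n.+1) :
  prime p -> odd p -> (0 < t)%N -> B \isn't a mxOver (dvdz p) -> forall e k,
  ((1 + (p ^ t)%:Z *: B) ^+ (p ^ e) - 1 \is a mxOver (dvdz (p ^ k)%:Z))
    = (k <= t + e)%N.
Proof.
move=> p_pr p_odd t_gt0 pB e k.
have [Be -> pBe] := lift_exponent B p_pr p_odd t_gt0 e.
rewrite [1 + _]addrC addrK scale_pexp_mxOver_dvdz //.
by apply: contra pB => pBe'; rewrite -[B](subKr Be) rpredB.
Qed.

Section LinearRecurrence.
Variables (n : nat) (A : 'M[int]_n.+1).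

Lemma size_lrs_state m : size (lrs_state A m) = n.+1.
Proof.
elim: m => [|m IHm] /=; first by rewrite size_rcons size_nseq.
by rewrite size_rcons size_behead IHm.
Qed.

Lemma nth_lrs_state m i : (i < n.+1)%N -> (lrs_state A m)`_i = lrs A (m + i).
Proof.
elim: i m => [|i IHi] m lt_in; first by rewrite addn0 /lrs nth0.
rewrite -addSnnS -IHi 1?ltnW //= nth_rcons size_behead size_lrs_state /=.
by rewrite ltnS in lt_in; rewrite lt_in nth_behead.
Qed.

Lemma lrs_rec m :
  lrs A (m + n.+1) = \sum_(j < n.+1) lrs_coef A j * lrs A (m + j).
Proof.
rewrite -addSnnS -nth_lrs_state //= nth_rcons size_behead size_lrs_state /=.
by rewrite ltnn eqxx; apply: eq_bigr => j _; rewrite nth_lrs_state.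
Qed.

Lemma lrs_small i : (i < n.+1)%N -> lrs A i = (i == n)%:R.
Proof.
move=> lt_in; rewrite -(add0n i) -nth_lrs_state //= nth_rcons size_nseq /= add0n.
case: ltnP => [lt_in'|]; last by case: eqP.
by rewrite nth_nseq lt_in' (ltn_eqF lt_in').
Qed.

Definition lrs_companion : 'M[int]_n.+1 :=
  \matrix_(i, j) if (i < n)%N then ((j : nat) == i.+1)%:R else lrs_coef A j.

Definition lrs_window m : 'cV[int]_n.+1 := \col_i lrs A (m + i).

Lemma mulmx_companion_window m :
  lrs_companion *m lrs_window m = lrs_window m.+1.
Proof.
apply/matrixP => i j; rewrite !mxE; under eq_bigr do rewrite !mxE.
have [lt_in | le_ni] := ltnP i n.
  rewrite (bigD1 (Ordinal (lt_in : i.+1 < n.+1)%N)) //= eqxx mul1r big1 ?addr0.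
    by rewrite addnS.
  move=> k /eqP neq_k; case: eqP => [eq_k|]; last by rewrite mul0r.
  by case: neq_k; apply: val_inj.
have -> : (i : nat) = n by apply/eqP; rewrite eqn_leq -ltnS ltn_ord le_ni.
by rewrite addSnnS lrs_rec.
Qed.

Lemma mulmx_companionX_window k m :
  lrs_companion ^+ k *m lrs_window m = lrs_window (k + m).
Proof.
elim: k m => [|k IHk] m; first by rewrite expr0 mul1mx.
by rewrite exprSr -mulmxE -mulmxA mulmx_companion_window IHk addnS.
Qed.

(* Column j is lrs_window (n - j); the matrix is unitriangular. *)
Definition lrs_hankel : 'M[int]_n.+1 := \matrix_(i, j) lrs A (rev_ord j + i).

Lemma lrs_hankel_unit : lrs_hankel \in unitmx.
Proof.
have trig_hankel : is_trig_mx lrs_hankel.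
  apply/is_trig_mxP => i j lt_ij; have lt_jn := ltn_ord j.
  rewrite mxE lrs_small /=; last lia.
  by have /negbTE -> : (n.+1 - j.+1 + i != n)%N by lia.
rewrite unitmxE det_trig // big1 ?unitr1 // => i _; have lt_in := ltn_ord i.
rewrite mxE lrs_small /=; last lia.
by have -> : (n.+1 - i.+1 + i == n)%N by lia.
Qed.

End LinearRecurrence.

Definition period_mod (v : nat -> int) (d : int) (T : nat) : Prop :=
  forall m, (v (m + T)%N == v m %[mod d])%Z.

Lemma period_mod_mul v d T k : period_mod v d T -> period_mod v d (k * T).
Proof.
move=> perT; elim: k => [|k IHk] m; first by rewrite mul0n addn0.
by rewrite mulSn addnA (eqP (IHk _)) (eqP (perT _)).
Qed.

Lemma min_period_modP v d T : min_period_mod v d T ->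
  forall Q, period_mod v d Q <-> (T %| Q)%N.
Proof.
move=> [T_gt0 [perT minT]] Q; split=> [perQ | /dvdnP[k ->]]; last first.
  exact: period_mod_mul.
have perQT : period_mod v d (Q %% T).
  move=> m; rewrite -(eqP (period_mod_mul (Q %/ T) perT _)) -addnA.
  by rewrite [(Q %% T + _)%N]addnC -divn_eq (eqP (perQ _)).
have [/eqP // | QT_gt0] := posnP (Q %% T).
by have := minT _ QT_gt0 perQT; rewrite leqNgt ltn_mod T_gt0.
Qed.

Lemma lrs_period_modE n (A : 'M[int]_n.+1) d Q :
  period_mod (lrs A) d Q <-> lrs_companion A ^+ Q - 1 \is a mxOver (dvdz d).
Proof.
split=> [perQ | dCQ m]; last first.
  have /mxOverP/(_ ord0 ord0) := mulmx_mxOver_dvdzl (lrs_window A m) dCQ.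
  by rewrite mulmxBl mul1mx mulmx_companionX_window !mxE !addn0 addnC eqz_mod_dvd.
set X := _ - 1; rewrite -(mulmxK (lrs_hankel_unit A) X).
apply: mulmx_mxOver_dvdzl; apply/mxOverP => i j.
have -> : (X *m lrs_hankel A) i j = (X *m lrs_window A (rev_ord j)) i ord0.
  by rewrite !mxE; apply: eq_bigr => k _; rewrite !mxE.
rewrite mulmxBl mul1mx mulmx_companionX_window !mxE -eqz_mod_dvd.
by rewrite -addnA addnC perQ.
Qed.

Lemma lrs_companion_eigenvector n (A : 'M[int]_n.+1) (z : algC) :
  root (map_poly intr (char_poly A)) z ->
  map_mx intr (lrs_companion A) *m (\col_i z ^+ i) = z *: \col_i z ^+ i.
Proof.
have size_chiA : size (map_poly intr (char_poly A) : {poly algC}) = n.+2.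
  by rewrite size_map_inj_poly ?size_char_poly //; apply: intr_inj.
move=> chiA_z; apply/matrixP => i j; rewrite !mxE; under eq_bigr do rewrite !mxE.
have [lt_in | le_ni] := ltnP i n.
  rewrite (bigD1 (Ordinal (lt_in : i.+1 < n.+1)%N)) //= eqxx rmorph1 mul1r.
  rewrite big1 ?addr0 ?exprS // => k /eqP neq_k.
  case: eqP => [eq_k|]; last by rewrite rmorph0 mul0r.
  by case: neq_k; apply: val_inj.
have -> : (i : nat) = n by apply/eqP; rewrite eqn_leq -ltnS ltn_ord le_ni.
move: chiA_z; rewrite /root horner_coef size_chiA big_ord_recr /=.
rewrite coef_map_id0 ?mulr0z //.
have -> : (char_poly A)`_n.+1 = 1.
  by have /monicP := char_poly_monic A; rewrite lead_coefE size_char_poly.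
rewrite mulr1z mul1r -exprS addrC addr_eq0 => /eqP ->.
rewrite -sumrN; apply: eq_bigr => k _.
by rewrite coef_map_id0 ?mulr0z // /lrs_coef mulrNz mulNr.
Qed.

Lemma lrs_companionX_neq1 n (A : 'M[int]_n.+1) T :
  ergodic_mx A -> (0 < T)%N -> lrs_companion A ^+ T != 1.
Proof.
move=> [_ no_root_of_unity] T_gt0; apply/eqP => CT1.
have : size (map_poly intr (char_poly A) : {poly algC}) != 1%N.
  by rewrite size_map_inj_poly ?size_char_poly //; apply: intr_inj.
case/closed_rootP => z chiA_z; pose w : 'cV[algC]_n.+1 := \col_i z ^+ i.
have eigenX k : map_mx intr (lrs_companion A ^+ k) *m w = z ^+ k *: w.
  elim: k => [|k IHk]; first by rewrite expr0 map_mx1 mul1mx scale1r.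
  rewrite exprS -mulmxE map_mxM -mulmxA IHk -scalemxAr.
  by rewrite lrs_companion_eigenvector // scalerA -exprSr.
have /matrixP/(_ ord0 ord0) := eigenX T.
rewrite CT1 map_mx1 mul1mx !mxE expr0 mulr1.
by move/esym/eqP; apply/negP/no_root_of_unity.
Qed.

Lemma eq_expn_mul_of_dvdn (p s d m : nat) : prime p -> (0 < d)%N -> (d %| m)%N ->
  (forall e, (m %| p ^ e * d)%N <-> (s <= e)%N) -> m = (p ^ s * d)%N.
Proof.
move=> p_pr d_gt0 /dvdnP[q ->] dvdm_pexp.
have /(dvdn_pfactor _ _ p_pr)[a le_as def_q] : (q %| p ^ s)%N.
  by rewrite -(dvdn_pmul2r d_gt0); apply/dvdm_pexp.
subst q; have /dvdm_pexp le_sa := dvdnn (p ^ a * d).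
by rewrite (@anti_leq a s) ?le_as.
Qed.

Lemma mx_pexp_periods n (C : 'M[int]_n.+1) (p : nat) (T : nat -> nat) :
  prime p -> odd p -> (0 < T 1)%N -> C ^+ T 1 != 1 ->
  (forall r, (0 < r)%N -> forall Q,
     C ^+ Q - 1 \is a mxOver (dvdz (p ^ r)%:Z) <-> (T r %| Q)%N) ->
  exists t, forall k, (0 < k)%N -> T k = (p ^ (k - t) * T 1)%N.
Proof.
move=> p_pr p_odd T1_gt0 CT1_neq1 periodP; set D := C ^+ T 1.
have pD1 : D - 1 \is a mxOver (dvdz p).
  by rewrite -[Posz p]/((p ^ 1)%N%:Z); apply/periodP.
have D1_neq0 : D - 1 != 0 by rewrite subr_eq0.
have [t [B [defD1 pB]]] := mx_pfactor (prime_gt1 p_pr) D1_neq0.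
have t_gt0 : (0 < t)%N.
  by case: t defD1 => // /esym; rewrite expn0 scale1r => defB; rewrite defB pD1 in pB.
have {defD1} defD : D = 1 + (p ^ t)%:Z *: B by rewrite -defD1 addrC subrK.
exists t => k k_gt0; apply: eq_expn_mul_of_dvdn => // [|e].
  apply/(periodP 1%N isT)/(@mxOver_dvdz_trans _ _ _ (p ^ k)%:Z).
    by rewrite dvdzE /= dvdn_exp2l.
  exact/(periodP k k_gt0).
by rewrite -periodP // mulnC exprM -/D defD lift_exponent_valuation // leq_subLR.
Qed.

(* The coprimality of p and det A only serves to make the periods T r exist,
   which the last hypothesis already provides. *)
Theorem lemma2p10 (n : nat) (A : 'M[int]_n) (p : nat) (T : nat -> nat) :
  (0 < n)%N ->
  ergodic_mx A ->
  prime p -> odd p ->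
  coprime p `|\det A|%N ->
  (forall r : nat, (1 <= r)%N ->
     min_period_mod (lrs A) ((p ^ r)%N)%:Z (T r)) ->
  exists t : nat,
    (forall k : nat, (1 <= k <= t)%N -> T k = T 1%N) /\
    (forall k : nat, (t < k)%N -> T k = (p ^ (k - t) * T 1%N)%N).
Proof.
case: n A => [|n] A // _ ergA p_pr p_odd _ minT.
have T1_gt0 : (0 < T 1)%N by case: (minT 1%N isT).
have periodP r : (0 < r)%N -> forall Q,
    lrs_companion A ^+ Q - 1 \is a mxOver (dvdz (p ^ r)%:Z) <-> (T r %| Q)%N.
  by move=> r_gt0 Q; rewrite -lrs_period_modE; apply: min_period_modP (minT r r_gt0) Q.
have CT1_neq1 := lrs_companionX_neq1 ergA T1_gt0.
have [t defT] := mx_pexp_periods p_pr p_odd T1_gt0 CT1_neq1 periodP.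
exists t; split=> [k /andP[k_gt0 le_kt] | k lt_tk].
  by rewrite defT // (eqP (_ : k - t == 0)%N) ?subn_eq0 // mul1n.
by rewrite defT // (leq_ltn_trans (leq0n t) lt_tk).
Qed.
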